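(* Let $R$ be a discrete $\Gamma$-ring and let $w\in R[2]$ be a formal sum law in $R$. Then there is a unique multiplicative map (morphism of $\Gamma$-rings) $\phi: H\mathbb{N}\to R$ such that $\phi(1_{2^n})=w^n\in R[2^n]$ for all $n\ge 0$. Concretely, for $(n_1,\dots,n_k)\in \mathbb{N}[k]$ one has $\phi(n_1,\dots,n_k)=f(w^n)$ for any $n$ and any pointed map $f:[2^n]\to[k]$ with $f(1_{2^n})=(n_1,\dots,n_k)$.
   Context: Let $[n]=\{0,1,\dots,n\}$, pointed at $0$. $\Gamma^{op}$ is the category with objects $[n]$, $n\ge0$, and all pointed maps. A $\Gamma$-space is a functor $F$ from $\Gamma^{op}$ to pointed simplicial sets with $F[0]$ a point; it is extended to all finite pointed sets by choosing isomorphisms with the $[n]$. For a pointed map $f:K\to L$ we write $f$ also for $F(f)$. The symmetric group $\Sigma_n$ acts on $[n]$ by permuting $\{1,\dots,n\}$ and hence acts on $F[n]$. We identify $[n]\wedge[m]$ with $[nm]$ using the inverse lexicographic order: $i\wedge j\mapsto (j-1)n+i$ for $1\le i\le n,\ 1\le j\le m$. A $\Gamma$-ring is a $\Gamma$-space $R$ with a unit $\eta:\mathbf S\to R$ ($\mathbf S$ the inclusion functor of $\Gamma^{op}$ into pointed sets) and an associative unital multiplication, equivalently a family of maps $R(K)\wedge R(L)\to R(K\wedge L)$, $p\wedge q\mapsto pq$, natural in $K$ and $L$, associative, with unit $1:=\eta(1)\in R[1]$. $R$ is discrete if each $R(K)$ is a set (a constant simplicial set). For $w\in R[2]$, $w^k\in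 R[2^k]$ denotes the $k$-fold product (with $[2]^{\wedge k}=[2^k]$ via the identification above), $w^0=1$. A multiplicative map $\phi:A\to B$ of $\Gamma$-rings is a natural transformation with $\phi\circ\eta_A=\eta_B$ and $\phi(pq)=\phi(p)\phi(q)$. The pointed map $p^n_i:[n]\to[n-1]$ ($1\le i\le n$) is given by $p^n_i(j)=j$ for $j<i$, $p^n_i(i)=0$, $p^n_i(j)=j-1$ for $j>i$. $H\mathbb{N}$ is the $\Gamma$-ring with $H\mathbb{N}(K)=$ the reduced free commutative monoid on $K$ (so $H\mathbb{N}[k]=\mathbb{N}^k$, $\mathbb N$ including $0$), pointed maps acting by summing coefficients along fibres, unit sending $k\in K$ to the generator $k$, and multiplication $(\sum_k a_k k)(\sum_l b_l l)=\sum_{k\wedge l}a_kb_l(k\wedge l)$. $1_n=(1,\dots,1)\in H\mathbb{N}[n]$. A formal sum law in a $\Gamma$-ring $R$ is an element $w\in R[2]$ with (1) $p^2_1(w)=1$ and $p^2_2(w)=1$, and (2) for every $k\ge1$, $w^k\in R[2^k]$ is fixed by the action of $\Sigma_{2^k}$. *)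

From HB Require Import structures.
From mathcomp Require Import all_boot.
Set Implicit Arguments. Unset Strict Implicit. Unset Printing Implicit Defensive.

(* [n] = {0,...,n} is 'I_n.+1, pointed at ord0.
   Pointed maps [n] -> [m] : finite functions sending 0 to 0. *)
Definition ptmap (n m : nat) := {f : {ffun 'I_n.+1 -> 'I_m.+1} | f ord0 == ord0}.

Definition papp n m (f : ptmap n m) : 'I_n.+1 -> 'I_m.+1 := fun x => sval f x.

Lemma mkp_proof n m (f : 'I_n.+1 -> 'I_m.+1) :
  [ffun x => if x == ord0 then ord0 else f x] ord0 == ord0.
Proof. by rewrite ffunE eqxx. Qed.

Definition mkp n m (f : 'I_n.+1 -> 'I_m.+1) : ptmap n m :=
  exist _ [ffun x => if x == ord0 then ord0 else f x] (mkp_proof f).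

Definition pid n : ptmap n n := mkp id.
Definition pcomp n m l (g : ptmap m l) (f : ptmap n m) : ptmap n l :=
  mkp (fun x => papp g (papp f x)).

Definition castp n m (e : n = m) : ptmap n m := mkp (cast_ord (congr1 S e)).

(* f /\ g : [n]^[m] = [n*m] -> [n']^[m'] = [n'*m'], using the inverse
   lexicographic identification i /\ j |-> (j-1) n + i. *)
Definition smash_fun n m n' m' (f : ptmap n n') (g : ptmap m m')
  (x : 'I_(n * m).+1) : 'I_(n' * m').+1 :=
  let i := (x.-1 %% n).+1 in
  let j := (x.-1 %/ n).+1 in
  let i' := papp f (inord i) in
  let j' := papp g (inord j) in
  if (i' == ord0) || (j' == ord0) then ord0
  else inord ((j'.-1) * n' + i').

Definition psmash n m n' m' (f : ptmap n n') (g : ptmap m m') : ptmap (n * m) (n' * m') :=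
  mkp (smash_fun f g).

Definition pproj n (i : nat) : ptmap n.+1 n :=
  mkp (fun j : 'I_n.+2 =>
         if j < i then inord j else if val j == i then ord0 else inord j.-1).

Record GData := {
  car : nat -> Type;
  act : forall n m, ptmap n m -> car n -> car m;
  mul : forall n m, car n -> car m -> car (n * m);
  one : car 1
}.

Definition is_GammaRing (R : GData) : Prop :=
  (forall x y : car R 0, x = y) /\
  (forall n (x : car R n), act (pid n) x = x) /\
  (forall n m l (f : ptmap n m) (g : ptmap m l) (x : car R n),
      act (pcomp g f) x = act g (act f x)) /\
  (forall n m n' m' (f : ptmap n n') (g : ptmap m m') (x : car R n) (y : car R m),
      act (psmash f g) (mul x y) = mul (act f x) (act g y)) /\
  (forall n m l (x : car R n) (y : car R m) (z : car R l),
      act (castp (esym (mulnA n m l))) (mul (mul x y) z) = mul x (mul y z)) /\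
  (forall n (x : car R n), act (castp (mul1n n)) (mul (one R) x) = x) /\
  (forall n (x : car R n), act (castp (muln1 n)) (mul x (one R)) = x).

Definition is_mult (A B : GData) (phi : forall n, car A n -> car B n) : Prop :=
  (forall n m (f : ptmap n m) (x : car A n), phi m (act f x) = act f (phi n x)) /\
  phi 1 (one A) = one B /\
  (forall n m (x : car A n) (y : car A m), phi (n * m) (mul x y) = mul (phi n x) (phi m y)).

Fixpoint wpow (R : GData) (w : car R 2) (k : nat) : car R (2 ^ k) :=
  match k with
  | 0 => act (castp (esym (expn0 2))) (one R)
  | k'.+1 => act (castp (esym (expnS 2 k'))) (mul w (wpow w k'))
  end.

Definition formal_sum_law (R : GData) (w : car R 2) : Prop :=
  act (pproj 1 1) w = one R /\ act (pproj 1 2) w = one R /\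
  (forall k, 1 <= k -> forall s : ptmap (2 ^ k) (2 ^ k),
      injective (papp s) -> act s (wpow w k) = wpow w k).

(* H N: H N[k] = N^k; coordinate i : 'I_k is the coefficient of the point i+1. *)
Definition coef k (a : {ffun 'I_k -> nat}) (i : nat) : nat :=
  if @insub nat (fun x => x < k) 'I_k i is Some j then a j else 0.

Definition HN_act n m (f : ptmap n m) (a : {ffun 'I_n -> nat}) : {ffun 'I_m -> nat} :=
  [ffun j : 'I_m => \sum_(i < n | papp f (lift ord0 i) == lift ord0 j) a i].

Definition HN_mul n m (a : {ffun 'I_n -> nat}) (b : {ffun 'I_m -> nat})
  : {ffun 'I_(n * m) -> nat} :=
  [ffun c : 'I_(n * m) => coef a (c %% n) * coef b (c %/ n)].

Definition HN : GData :=
  {| car := fun k => {ffun 'I_k -> nat};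
     act := HN_act; mul := HN_mul; one := [ffun _ => 1] |}.

Definition ones k : car HN k := [ffun _ => 1].

From mathcomp Require Import all_boot perm.
From mathcomp Require Import zify.
(* Imported after MathComp so that Defs.pcomp shadows ssrfun's pcomp. *)
From Pilot Require Import Defs.
Set Implicit Arguments. Unset Strict Implicit. Unset Printing Implicit Defensive.

(* The fibre-count vector of a pointed map f : [N] -> [k] is the image
   f(1_N) in H N[k].  Every a in H N[k] is such a vector, for a map out of
   some [2^n] (list each point j exactly a_j times), so phi(a) := f(w^n) for
   such an f is forced, which gives uniqueness.  It is well defined because
   (i) w^n is obtained from w^m (m >= n) by a map all of whose fibres have
   size one (use p^2_2(w) = 1 repeatedly), and (ii) two maps out of [2^m]
   with the same fibre counts differ by a permutation of [2^m], which fixes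
   w^m by the formal sum law.  Naturality of phi is then immediate, and
   multiplicativity follows from w^(p+q) = w^p w^q and the fact that fibre
   counts of a smash product are products of fibre counts. *)

Lemma papp0 n m (f : ptmap n m) : papp f ord0 = ord0.
Proof. by rewrite /papp; case: f => f /= /eqP. Qed.

Lemma ptmap_ext n m (f g : ptmap n m) : papp f =1 papp g -> f = g.
Proof.
case: f g => f Hf [g Hg] /= fg.
have fg' : f = g by apply/ffunP => x; exact: fg x.
by subst g; congr exist; exact: eq_irrelevance.
Qed.

Lemma papp_mkp n m (F : 'I_n.+1 -> 'I_m.+1) x :
  papp (mkp F) x = if x == ord0 then ord0 else F x.
Proof. by rewrite /papp /= ffunE. Qed.

Lemma lift0_neq0 n (i : 'I_n) : (lift ord0 i == ord0) = false.
Proof. by rewrite eq_sym (negbTE (neq_lift _ _)). Qed.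

Lemma papp_mkp_lift n m (F : 'I_n.+1 -> 'I_m.+1) (i : 'I_n) :
  papp (mkp F) (lift ord0 i) = F (lift ord0 i).
Proof. by rewrite papp_mkp lift0_neq0. Qed.

Lemma lift0_inord n (i : 'I_n) : lift ord0 i = inord i.+1.
Proof. by apply/val_inj; rewrite /= inordK // ltnS. Qed.

(* Canonical identifications: pointed maps preserving the numeric value of
   every point, such as the identity and the casts.  Between two given
   [n], [m] there is at most one, so the coherence of the various
   identifications used below reduces to checking this property. *)
Definition is_ident n m (f : ptmap n m) : Prop := forall x, val (papp f x) = val x.

Lemma ident_eq n m (f g : ptmap n m) : is_ident f -> is_ident g -> f = g.
Proof. by move=> Hf Hg; apply: ptmap_ext => x; apply: val_inj; rewrite Hf Hg. Qed.

Lemma ident_pid n : is_ident (pid n).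
Proof. by move=> x; rewrite papp_mkp; case: eqP => // ->. Qed.

Lemma ident_castp n m (e : n = m) : is_ident (castp e).
Proof. by move=> x; rewrite papp_mkp; case: eqP => // ->. Qed.

Lemma ident_pcomp n m l (g : ptmap m l) (f : ptmap n m) :
  is_ident g -> is_ident f -> is_ident (pcomp g f).
Proof. by move=> Hg Hf x; rewrite papp_mkp; case: eqP => [->|] //; rewrite Hg Hf. Qed.

Lemma ident_psmash n m n' m' (f : ptmap n n') (g : ptmap m m') :
  n = n' -> is_ident f -> is_ident g -> is_ident (psmash f g).
Proof.
move=> e Hf Hg x; subst n'; rewrite papp_mkp; case: eqP => [->|/eqP x0] //.
have xpos : 0 < x by move: x0; rewrite -(inj_eq val_inj) /= lt0n.
have := ltn_ord x; rewrite ltnS => xle.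
have npos : 0 < n by move: (nat_of_ord x) xle xpos => k; case: (n) => [|//]; rewrite mul0n; lia.
have i_lt : (x.-1 %% n).+1 < n.+1 by rewrite ltnS ltn_mod.
have j_val : val (papp g (inord (x.-1 %/ n).+1)) = (x.-1 %/ n).+1.
  by rewrite Hg /= inordK // ltnS ltn_divLR //; nia.
have := ltn_ord (papp g (inord (x.-1 %/ n).+1)).
rewrite j_val ltnS ltn_divLR // => x_lt.
have i_val : val (papp f (inord (x.-1 %% n).+1)) = (x.-1 %% n).+1.
  by rewrite Hf /= inordK.
rewrite /smash_fun -!(inj_eq val_inj) i_val j_val /= i_val j_val inordK.
  by rewrite addnS -divn_eq; lia.
by rewrite succnK addnS -divn_eq; lia.
Qed.

Section GammaRingAxioms.
Variable R : GData.
Hypothesis HR : is_GammaRing R.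

Lemma act_pid n (x : car R n) : act (pid n) x = x.
Proof. by case: HR => _ [H _]. Qed.

Lemma act_pcomp n m l (f : ptmap n m) (g : ptmap m l) (x : car R n) :
  act (pcomp g f) x = act g (act f x).
Proof. by case: HR => _ [_ [H _]]. Qed.

Lemma act_psmash n m n' m' (f : ptmap n n') (g : ptmap m m') (x : car R n) (y : car R m) :
  act (psmash f g) (mul x y) = mul (act f x) (act g y).
Proof. by case: HR => _ [_ [_ [H _]]]. Qed.

Lemma mulA_act n m l (x : car R n) (y : car R m) (z : car R l) :
  act (castp (esym (mulnA n m l))) (mul (mul x y) z) = mul x (mul y z).
Proof. by case: HR => _ [_ [_ [_ [H _]]]]. Qed.

Lemma mul1_act n (x : car R n) : act (castp (mul1n n)) (mul (one R) x) = x.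
Proof. by case: HR => _ [_ [_ [_ [_ [H _]]]]]. Qed.

Lemma act_ident n (f : ptmap n n) (x : car R n) : is_ident f -> act f x = x.
Proof. by move=> Hf; rewrite (ident_eq Hf (@ident_pid n)) act_pid. Qed.

End GammaRingAxioms.

Definition fibres N k (f : ptmap N k) : car HN k := HN_act f (ones N).

Lemma HN_act_pcomp n m p (g : ptmap m p) (f : ptmap n m) (a : car HN n) :
  HN_act (pcomp g f) a = HN_act g (HN_act f a).
Proof.
apply/ffunP => j; rewrite !ffunE.
under [RHS]eq_bigr => l _ do rewrite ffunE.
rewrite (exchange_big_dep predT) //= [LHS]big_mkcond /=.
apply: eq_bigr => i _; rewrite /pcomp papp_mkp_lift.
case: (unliftP ord0 (papp f (lift ord0 i))) => [/= l0 ->|->]; last first.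
  rewrite papp0 [ord0 == _]eq_sym lift0_neq0 big_pred0 // => l.
  by rewrite [ord0 == _]eq_sym lift0_neq0 andbF.
have only_l0 l : (papp g (lift ord0 l) == lift ord0 j) && (lift ord0 l0 == lift ord0 l)
    = (l == l0) && (papp g (lift ord0 l0) == lift ord0 j).
  rewrite (inj_eq lift_inj) [l0 == l]eq_sym.
  by case: (l =P l0) => [->|_]; rewrite ?andbT ?andbF.
rewrite (eq_bigl _ _ only_l0).
case: (papp g (lift ord0 l0) == lift ord0 j).
  by rewrite (big_pred1 l0) // => l; rewrite andbT.
by rewrite big_pred0 // => l; rewrite andbF.
Qed.

Lemma fibres_pcomp n m p (g : ptmap m p) (f : ptmap n m) :
  fibres (pcomp g f) = HN_act g (fibres f).
Proof. exact: HN_act_pcomp. Qed.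

Lemma fibres_ident n m (f : ptmap n m) : n = m -> is_ident f -> fibres f = ones m.
Proof.
move=> e Hf; subst m; apply/ffunP => j; rewrite !ffunE.
rewrite (big_pred1 j) ?ffunE // => i /=.
by rewrite -(inj_eq val_inj) Hf (inj_eq val_inj) (inj_eq lift_inj).
Qed.

Lemma fibres_pid n : fibres (pid n) = ones n.
Proof. exact: fibres_ident (@ident_pid n). Qed.

Lemma fibres_pproj : fibres (pproj 1 2) = ones 1.
Proof.
apply/ffunP => j; rewrite !ffunE (ord1 j).
rewrite big_mkcond !big_ord_recl big_ord0 /pproj !papp_mkp_lift !ffunE.
by rewrite -!(inj_eq val_inj) /= !inordK.
Qed.

Lemma sum_divmod (N M : nat) (P Q : nat -> bool) :
  \sum_(0 <= x < N * M) (P (x %% N) && Q (x %/ N) : nat) =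
  (\sum_(0 <= i < N) (P i : nat)) * (\sum_(0 <= j < M) (Q j : nat)).
Proof.
elim: M => [|M IH]; first by rewrite muln0 big_geq // [X in _ * X]big_geq // muln0.
rewrite mulnS addnC (@big_cat_nat _ _ _ (N * M)) ?leq_addr // IH.
have -> : \sum_(N * M <= i < N * M + N) (P (i %% N) && Q (i %/ N) : nat) =
    \sum_(0 <= i < N) (P ((i + N * M) %% N) && Q ((i + N * M) %/ N) : nat).
  by rewrite -{1}[N * M]add0n big_addn addKn.
rewrite /= (@big_nat_recr _ _ _ M 0) //= mulnDr; congr (_ + _).
rewrite big_distrl /=; apply: eq_big_nat => i /andP [_ iN].
rewrite addnC (mulnC N) modnMDl modn_small // divnMDl ?(leq_ltn_trans _ iN) //.
by rewrite divn_small // addn0 mulnb.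
Qed.

Lemma divmod_uniq n a b a' b' : a < n -> a' < n ->
  (b * n + a == b' * n + a') = (a == a') && (b == b').
Proof.
move=> an a'n; have np : 0 < n by apply: leq_ltn_trans an.
apply/eqP/andP => [E|[/eqP -> /eqP ->]] //.
have := congr1 (modn^~ n) E; have := congr1 (divn^~ n) E => /=.
by rewrite !modnMDl !modn_small // !divnMDl // !divn_small // !addn0 => -> ->.
Qed.

Lemma coefE k (a : {ffun 'I_k -> nat}) i (ik : i < k) : coef a i = a (Ordinal ik).
Proof. by rewrite /coef insubT. Qed.

Lemma sum_ones K (C : pred 'I_K) (D : nat -> bool) :
  (forall i : 'I_K, C i = D i) ->
  \sum_(i < K | C i) (ones K) i = \sum_(0 <= i < K) (D i : nat).
Proof.
move=> CD; rewrite big_mkcond big_mkord; apply: eq_bigr => i _.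
by rewrite ffunE CD; case: (D i).
Qed.

Lemma psmash_hits n m N M (f : ptmap N n) (g : ptmap M m) (x : 'I_(N * M)) (c : 'I_(n * m)) :
  0 < n ->
  (papp (psmash f g) (lift ord0 x) == lift ord0 c) =
  (val (papp f (inord (x %% N).+1)) == (c %% n).+1) &&
  (val (papp g (inord (x %/ N).+1)) == (c %/ n).+1).
Proof.
move=> np; rewrite papp_mkp_lift /smash_fun /= add0n.
set i := papp f _; set j := papp g _.
case: ifP => [/orP i0_or_j0|/norP [i0 j0]].
  rewrite [ord0 == _]eq_sym lift0_neq0.
  by case: i0_or_j0 => /eqP ->; rewrite /= ?andbF.
have ip : 0 < i by move: i0; rewrite -(inj_eq val_inj) /= lt0n.
have jp : 0 < j by move: j0; rewrite -(inj_eq val_inj) /= lt0n.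
have il := ltn_ord i; have jl := ltn_ord j.
rewrite -(inj_eq val_inj) /= inordK; last by nia.
have -> : j.-1 * n + i = (j.-1 * n + i.-1).+1 by lia.
rewrite eqSS {1}(divn_eq c n) divmod_uniq ?ltn_mod //; last by lia.
by congr andb; apply/eqP/eqP; lia.
Qed.

Lemma fibres_psmash n m N M (f : ptmap N n) (g : ptmap M m) :
  fibres (psmash f g) = HN_mul (fibres f) (fibres g).
Proof.
apply/ffunP => c; rewrite !ffunE.
have cnm := ltn_ord c.
have np : 0 < n by move: (nat_of_ord c) cnm => k; case: (n) => //; rewrite mul0n.
have cn : c %% n < n by rewrite ltn_mod.
have cq : c %/ n < m by rewrite ltn_divLR //; lia.
pose P i := val (papp f (inord i.+1)) == (c %% n).+1.
pose Q j := val (papp g (inord j.+1)) == (c %/ n).+1.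
rewrite (coefE _ cn) (coefE _ cq) !ffunE.
rewrite (@sum_ones _ _ (fun x => P (x %% N) && Q (x %/ N))); last first.
  by move=> x; rewrite psmash_hits.
rewrite sum_divmod; congr (_ * _); symmetry.
  by apply: sum_ones => i; rewrite lift0_inord -(inj_eq val_inj).
by apply: sum_ones => j; rewrite lift0_inord -(inj_eq val_inj).
Qed.

Lemma HN_mul_ones N M : HN_mul (ones N) (ones M) = ones (N * M).
Proof.
apply/ffunP => c; rewrite !ffunE.
have cnm := ltn_ord c.
have np : 0 < N by move: (nat_of_ord c) cnm => k; case: (N) => //; rewrite mul0n.
have cn : c %% N < N by rewrite ltn_mod.
have cq : c %/ N < M by rewrite ltn_divLR //; lia.
by rewrite (coefE _ cn) (coefE _ cq) !ffunE.
Qed.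

(* Every a in H N[k] is the fibre-count vector of a map out of some [2^n]:
   list each point j of [k] \ 0 exactly a_j times, send the i-th point of
   [2^n] to the i-th letter of this word and the remaining points to 0. *)
Definition word k (a : car HN k) : seq 'I_k.+1 :=
  flatten [seq nseq (a i) (lift ord0 i) | i <- enum 'I_k].

Definition word_len k (a : car HN k) : nat := size (word a).

Definition word_map k (a : car HN k) : ptmap (2 ^ word_len a) k :=
  mkp (fun x => nth ord0 (word a) x.-1).

Lemma count_word k (a : car HN k) j : count_mem (lift ord0 j) (word a) = a j.
Proof.
rewrite /word count_flatten sumnE !big_map.
under eq_bigr => i _ do rewrite count_nseq /=.
rewrite -enumT (bigD1_seq j) ?mem_enum ?enum_uniq //= eqxx mul1n.
rewrite big1_seq ?addn0 // => i /andP [ne _].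
by rewrite (inj_eq lift_inj) (negbTE ne).
Qed.

Lemma fibres_word_map k (a : car HN k) : fibres (word_map a) = a.
Proof.
apply/ffunP => j; rewrite ffunE.
set s := word a.
rewrite (@sum_ones _ _ (fun i => nth ord0 s i == lift ord0 j)); last first.
  by move=> i; rewrite papp_mkp_lift.
have s_le : size s <= 2 ^ word_len a by apply/ltnW/ltn_expl.
rewrite (@big_cat_nat _ _ _ (size s)) //= [X in _ + X]big1_seq ?addn0; last first.
  move=> i /andP [_]; rewrite mem_index_iota => /andP [si _].
  by rewrite nth_default // [ord0 == _]eq_sym lift0_neq0.
rewrite -count_word -/s -sum1_count (big_nth ord0) big_mkcond /=.
by rewrite [RHS]big_mkcond; apply: eq_bigr => i _; case: (_ == _).
Qed.

Definition image_seq N k (f : ptmap N k) : N.-tuple 'I_k.+1 :=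
  [tuple papp f (lift ord0 i) | i < N].

Lemma count_image_seq N k (f : ptmap N k) j :
  count_mem (lift ord0 j) (image_seq f) = fibres f j.
Proof.
rewrite /image_seq /= -sum1_count big_map enumT ffunE.
by apply: eq_bigr => i _; rewrite ffunE.
Qed.

Lemma count_total k (s : seq 'I_k.+1) :
  count_mem ord0 s + \sum_(j < k) count_mem (lift ord0 j) s = size s.
Proof.
elim: s => [|x s IH] /=; first by rewrite big1.
rewrite big_split /= -IH addnACA.
suff -> : (x == ord0) + \sum_(j < k) (x == lift ord0 j) = 1 by rewrite add1n.
case: (unliftP ord0 x) => [/= j0 ->|->].
  rewrite lift0_neq0 (bigD1 j0) //= eqxx big1 // => i ne.
  by rewrite (inj_eq lift_inj) eq_sym (negbTE ne).
by rewrite eqxx big1 // => i _; rewrite [ord0 == _]eq_sym lift0_neq0.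
Qed.

Lemma perm_eq_counts k (s t : seq 'I_k.+1) : size s = size t ->
  (forall j, count_mem (lift ord0 j) s = count_mem (lift ord0 j) t) -> perm_eq s t.
Proof.
move=> st counts; apply/allP => y _; apply/eqP.
case: (unliftP ord0 y) => [/= j ->|->]; first exact: counts.
have sums : \sum_(j < k) count_mem (lift ord0 j) s = \sum_(j < k) count_mem (lift ord0 j) t.
  by apply: eq_bigr => j _.
apply/eqP; rewrite -(eqn_add2r (\sum_(j < k) count_mem (lift ord0 j) s)).
by rewrite count_total sums count_total st.
Qed.

Lemma same_fibres_perm N k (f g : ptmap N k) : fibres f = fibres g ->
  exists s : ptmap N N, injective (papp s) /\ g = pcomp f s.
Proof.
move=> fg.
have /tuple_permP [p gp] : perm_eq (image_seq g) (image_seq f).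
  by apply: perm_eq_counts; rewrite ?size_tuple // => j; rewrite !count_image_seq fg.
have g_via_p i : papp g (lift ord0 i) = papp f (lift ord0 (p i)).
  have /(congr1 (fun t => tnth t i)) : image_seq g = [tuple tnth (image_seq f) (p i) | i < N].
    exact: val_inj.
  by rewrite !tnth_mktuple.
exists (mkp (fun x => if unlift ord0 x is Some i then lift ord0 (p i) else ord0)); split.
  move=> x y; rewrite !papp_mkp.
  case: (unliftP ord0 x) => [/= i ->|->]; case: (unliftP ord0 y) => [/= i' ->|->] //;
    rewrite ?lift0_neq0 ?eqxx ?liftK //.
  by move/lift_inj/perm_inj ->.
apply: ptmap_ext => x; rewrite papp_mkp.
case: (unliftP ord0 x) => [/= i ->|->]; last by rewrite eqxx papp0.
by rewrite lift0_neq0 papp_mkp_lift liftK g_via_p.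
Qed.

Section FormalSumLaw.
Variable R : GData.
Hypothesis HR : is_GammaRing R.
Variable w : car R 2.

Lemma wpow_add p q (F : ptmap (2 ^ (p + q)) (2 ^ p * 2 ^ q)) : is_ident F ->
  act F (wpow w (p + q)) = mul (wpow w p) (wpow w q).
Proof.
elim: p F => [|p IH] F HF.
  have wpow0_mul : mul (wpow w 0) (wpow w q) =
      act (psmash (castp (esym (expn0 2))) (pid (2 ^ q))) (mul (one R) (wpow w q)).
    by rewrite (act_psmash HR) (act_pid HR).
  rewrite wpow0_mul -{1}(mul1_act HR (wpow w q)) -(act_pcomp HR).
  congr act; apply: ident_eq.
    by apply: ident_pcomp => //; apply: ident_castp.
  by apply: ident_psmash => //; [apply: ident_castp | apply: ident_pid].
have wpow_pq : wpow w (p + q) =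
    act (castp (esym (expnD 2 p q))) (mul (wpow w p) (wpow w q)).
  rewrite -(IH (castp (expnD 2 p q))); last exact: ident_castp.
  rewrite -(act_pcomp HR).
  by rewrite (act_ident HR) //; apply: ident_pcomp; apply: ident_castp.
have wpowS_q : mul (wpow w p.+1) (wpow w q) =
    act (psmash (castp (esym (expnS 2 p))) (pid (2 ^ q))) (mul (mul w (wpow w p)) (wpow w q)).
  by rewrite (act_psmash HR) (act_pid HR).
have w_wpow_pq : mul w (wpow w (p + q)) =
    act (psmash (pid 2) (castp (esym (expnD 2 p q))))
      (act (castp (esym (mulnA 2 (2 ^ p) (2 ^ q)))) (mul (mul w (wpow w p)) (wpow w q))).
  by rewrite (mulA_act HR) (act_psmash HR) (act_pid HR) wpow_pq.
rewrite /= w_wpow_pq wpowS_q -!(act_pcomp HR); congr act; apply: ident_eq.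
  by repeat first [assumption | apply: ident_pid | apply: ident_castp
                  | apply: ident_pcomp | apply: ident_psmash].
by apply: ident_psmash; [rewrite expnS | apply: ident_castp | apply: ident_pid].
Qed.

Hypothesis Hw : formal_sum_law w.

(* w^n = (p^2_2 /\ id)(w^(n+1)) up to identifications, since p^2_2(w) = 1;
   the map involved has singleton fibres. *)
Lemma wpow_contract n : exists h : ptmap (2 ^ n.+1) (2 ^ n),
  wpow w n = act h (wpow w n.+1) /\ fibres h = ones (2 ^ n).
Proof.
case: Hw => _ [w_p22 _].
exists (pcomp (castp (mul1n (2 ^ n)))
  (pcomp (psmash (pproj 1 2) (pid (2 ^ n))) (castp (expnS 2 n)))); split.
  rewrite /= !(act_pcomp HR) -(act_pcomp HR (castp (esym (expnS 2 n)))).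
  rewrite (act_ident HR); last by apply: ident_pcomp; apply: ident_castp.
  by rewrite (act_psmash HR) w_p22 (act_pid HR) (mul1_act HR).
rewrite !fibres_pcomp (fibres_ident (expnS 2 n) (ident_castp _)).
rewrite -/(fibres (psmash _ _)) fibres_psmash fibres_pproj fibres_pid HN_mul_ones.
exact: (fibres_ident (mul1n _) (ident_castp _)).
Qed.

Lemma wpow_restrict n m : n <= m -> exists h : ptmap (2 ^ m) (2 ^ n),
  wpow w n = act h (wpow w m) /\ fibres h = ones (2 ^ n).
Proof.
elim: m => [|m IH].
  by rewrite leqn0 => /eqP ->; exists (pid _); rewrite (act_pid HR) fibres_pid.
rewrite leq_eqVlt => /orP [/eqP ->|/IH [h [wn_h h1]]].
  by exists (pid _); rewrite (act_pid HR) fibres_pid.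
have [h' [wm_h' h'1]] := wpow_contract m.
exists (pcomp h h'); split; first by rewrite (act_pcomp HR) -wm_h'.
by rewrite fibres_pcomp h'1.
Qed.

Lemma act_wpow_fibres n m k (f : ptmap (2 ^ n) k) (g : ptmap (2 ^ m) k) :
  fibres f = fibres g -> act f (wpow w n) = act g (wpow w m).
Proof.
move=> fg.
have [h1 [wn_h1 h1_1]] := wpow_restrict (leq_trans (leq_maxl n m) (leqnSn _)).
have [h2 [wm_h2 h2_1]] := wpow_restrict (leq_trans (leq_maxr n m) (leqnSn _)).
rewrite wn_h1 wm_h2 -(act_pcomp HR h1 f) -(act_pcomp HR h2 g).
have : fibres (pcomp f h1) = fibres (pcomp g h2).
  by rewrite !fibres_pcomp h1_1 h2_1 -!/(fibres _) fg.
case/same_fibres_perm => s [s_inj ->].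
rewrite (act_pcomp HR s (pcomp f h1)).
by case: Hw => _ [_ w_sym]; rewrite w_sym.
Qed.

Definition sum_law_map k (a : car HN k) : car R k :=
  act (word_map a) (wpow w (word_len a)).

Lemma sum_law_mapE k (a : car HN k) n (f : ptmap (2 ^ n) k) :
  fibres f = a -> sum_law_map a = act f (wpow w n).
Proof. by move=> <-; apply: act_wpow_fibres; rewrite fibres_word_map. Qed.

Lemma sum_law_map_ones n : sum_law_map (ones (2 ^ n)) = wpow w n.
Proof. by rewrite (sum_law_mapE (f := pid _)) ?fibres_pid // (act_pid HR). Qed.

Lemma sum_law_map_mult : is_mult sum_law_map.
Proof.
split; [|split].
- move=> n m f x /=.
  rewrite (sum_law_mapE (f := pcomp f (word_map x))) ?(act_pcomp HR) //.
  by rewrite fibres_pcomp fibres_word_map.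
- have := sum_law_map_ones 0; rewrite /= (act_ident HR) //; exact: ident_castp.
- move=> n m x y /=.
  rewrite /sum_law_map -(act_psmash HR) -(wpow_add (ident_castp (expnD 2 _ _))).
  rewrite -(act_pcomp HR); apply: sum_law_mapE.
  rewrite fibres_pcomp (fibres_ident (expnD 2 _ _) (ident_castp _)).
  by rewrite -/(fibres _) fibres_psmash !fibres_word_map.
Qed.

(* A multiplicative (indeed, merely natural) psi with psi(1_{2^n}) = w^n
   agrees with phi, since every a is f(1_{2^n}) for some f. *)
Lemma sum_law_map_unique (psi : forall n, car HN n -> car R n) :
  is_mult psi -> (forall n, psi (2 ^ n) (ones (2 ^ n)) = wpow w n) ->
  forall k (a : car HN k), psi k a = sum_law_map a.
Proof.
move=> [psi_nat _] psi_ones k a.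
rewrite -[in LHS](fibres_word_map a) /fibres /= psi_nat psi_ones.
by symmetry; apply: sum_law_mapE; rewrite fibres_word_map.
Qed.

End FormalSumLaw.

Theorem theorem2p2 (R : GData) (HR : is_GammaRing R) (w : car R 2)
  (Hw : formal_sum_law w) :
  exists phi : forall n, car HN n -> car R n,
    [/\ is_mult phi,
        (forall n, phi (2 ^ n) (ones (2 ^ n)) = wpow w n),
        (forall psi : forall n, car HN n -> car R n,
            is_mult psi -> (forall n, psi (2 ^ n) (ones (2 ^ n)) = wpow w n) ->
            forall k (a : car HN k), psi k a = phi k a)
      & (forall k (a : car HN k) n (f : ptmap (2 ^ n) k),
            act f (ones (2 ^ n)) = a -> phi k a = act f (wpow w n))].
Proof.
exists (sum_law_map w); split.
- exact: sum_law_map_mult.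
- exact: sum_law_map_ones.
- exact: sum_law_map_unique.
- by move=> k a n f; apply: sum_law_mapE.
Qed.
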